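(* Let $\varepsilon>0$, let $\widetilde M_f,\widetilde M_g$ be as in the context, and let $\varphi:\widetilde M_f\to\widetilde M_g$ be the continuous map $\varphi=\phi_1\cup\cdots\cup\phi_{\eta_f}$ obtained from a leaf assignment whose path extensions agree pairwise at least common ancestors of leaves. For each pair of distinct leaves $(u_i,u_j)$ of $\widetilde M_f$ let $v=\mathrm{LCA}(u_i,u_j)$ and let $P_i,P_j$ be their leaf-to-root paths. Traversing downward from $v$ along $P_i$ and $P_j$, let $u_r\in P_i$ and $u_s\in P_j$ be the first pair of nodes such that (i) $\tilde f(u_r)=\tilde f(u_s)$ and (ii) $\tilde f(v)-\tilde f(u_r)>2\varepsilon$ (the $2\varepsilon$-pair of $(u_i,u_j)$, if it exists). Then $\varphi$ satisfies the Ancestor-Shift property (for all $x_1,x_2\in\widetilde M_f$, $\varphi(x_1)\succeq\varphi(x_2)$ implies $i^{2\varepsilon}(x_1)\succeq i^{2\varepsilon}(x_2)$) if and only if $\varphi(u_r)\neq\varphi(u_s)$ for every pair of distinct leaves $(u_i,u_j)$ of $\widetilde M_f$, where for a leaf pair whose $2\varepsilon$-pair does not exist the condition is regarded as satisfied.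
   Context: A finite merge tree is a finite rooted tree regarded as a topological space, with a continuous height function strictly increasing along each edge toward the root. Let $M_f$ (height $\tilde f$, root $r_f$) and $M_g$ (height $\tilde g$, root $r_g$) be finite merge trees with $\tilde g(r_g)=\tilde f(r_f)+\varepsilon$. Let $H=\{\tilde f(u): u \text{ a node of } M_f\}\cup\{\tilde g(w)-\varepsilon: w\text{ a node of } M_g\}$. $\widetilde M_f$ is obtained from $M_f$ by inserting a degree-two node at every point $x$ with $\tilde f(x)\in H$ not already a node; $\widetilde M_g$ from $M_g$ by inserting degree-two nodes at all points with $\tilde g$-value in $H+\varepsilon$ not already nodes. ''Nodes'' below refers to nodes of the augmented trees. Let $u_1,\dots,u_{\eta_f}$ be the leaves of $\widetilde M_f$, and $\phi$ assign to each $u_i$ a node $\phi(u_i)$ of $\widetilde M_g$ with $\tilde g(\phi(u_i))=\tilde f(u_i)+\varepsilon$. With $P_i$ the path from $u_i$ to the root of $\widetilde M_f$ and $P_i'$ that from $\phi(u_i)$ to the root of $\widetilde M_g$, $\phi_i:P_i\to P_i'$ sends $x$ to the unique point of $P_i'$ with $\tilde g$-value $\tilde f(x)+\varepsilon$; it is assumed $\phi_i(v)=\phi_j(v)$ for $v=\mathrm{LCA}(u_i,u_j)$ (lowest common ancestor) for all $i\neq j$, so $\varphi(x)=\phi_i(x)$ for $x\in P_i$ is well-defined. $a\succeq b$ means $a$ lies on the upward path from $b$. For the shift map, $\widetilde M_f$ is regarded as extended by an infinite ray above its root on which $\tilde f$ increases to $+\infty$, and $i^{2\varepsilon}(x)$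 is the unique ancestor of $x$ with $\tilde f$-value $\tilde f(x)+2\varepsilon$. *)

From HB Require Import structures.
From mathcomp Require Import all_boot all_order all_algebra.
From mathcomp Require Import reals.
Set Implicit Arguments. Unset Strict Implicit. Unset Printing Implicit Defensive.
Import Order.TTheory GRing.Theory Num.Theory.
Local Open Scope ring_scope.

Record mtree (R : realType) := MTree {
  mt_V : finType;
  mt_par : mt_V -> mt_V;
  mt_root : mt_V;
  mt_ht : mt_V -> R;
  mt_par_root : mt_par mt_root = mt_root;
  mt_reach : forall v, exists k, iter k mt_par v = mt_root;
  mt_mono : forall v, v <> mt_root -> mt_ht v < mt_ht (mt_par v) }.

Arguments mt_V {R} m.
Arguments mt_par {R} m _.
Arguments mt_root {R} m.
Arguments mt_ht {R} m _.

Section MergeTreeDefs.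
Variables (R : realType) (T : mtree R).
Local Notation V := (mt_V T).
Local Notation par := (mt_par T).
Local Notation root := (mt_root T).
Local Notation ht := (mt_ht T).

Definition anc_node (a c : V) : Prop := exists k, iter k par c = a.

Definition is_leaf (v : V) : bool := [forall w, (par w == v) ==> (w == v)].

Definition is_lca (u1 u2 v : V) : Prop :=
  [/\ anc_node v u1, anc_node v u2 &
      forall w, anc_node w u1 -> anc_node w u2 -> anc_node w v].

(* Points of the geometric tree: (c, t) = the point of height t on the edge
   going up from node c (t = ht c is the node c itself).  This representation
   is unique.  Extended points allow the infinite ray above the root. *)
Definition point := (V * R)%type.

Definition is_ext_point (x : point) : Prop :=
  ht x.1 <= x.2 /\ (x.1 <> root -> x.2 < ht (par x.1)).

Definition is_point (x : point) : Prop :=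
  is_ext_point x /\ (x.1 = root -> x.2 = ht root).

Definition node_pt (v : V) : point := (v, ht v).

Definition is_node_pt (x : point) : Prop := x.2 = ht x.1.

Definition anc (a x : point) : Prop := anc_node a.1 x.1 /\ x.2 <= a.2.

Definition shift2 (eps : R) (x y : point) : Prop :=
  [/\ is_ext_point y, anc y x & y.2 = x.2 + 2 * eps].

Definition twoeps_pair (eps : R) (ui uj ur us : V) : Prop :=
  exists v, is_lca ui uj v /\ anc_node ur ui /\ anc_node us uj /\
    ht ur = ht us /\ 2 * eps < ht v - ht ur /\
    forall r s, anc_node r ui -> anc_node s uj -> ht r = ht s ->
      2 * eps < ht v - ht r -> ht r <= ht ur.

End MergeTreeDefs.

Arguments anc_node {R} T a c.
Arguments is_leaf {R} T v.
Arguments is_lca {R} T u1 u2 v.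
Arguments point {R} T.
Arguments is_ext_point {R} T x.
Arguments is_point {R} T x.
Arguments node_pt {R} T v.
Arguments is_node_pt {R} T x.
Arguments anc {R} T a x.
Arguments shift2 {R} T eps x y.
Arguments twoeps_pair {R} T eps ui uj ur us.

Section PairDefs.
Variables (R : realType) (Tf Tg : mtree R) (eps : R).

Definition Hset (h : R) : Prop :=
  (exists u : mt_V Tf, h = mt_ht Tf u) \/ (exists w : mt_V Tg, h = mt_ht Tg w - eps).

Definition augmented : Prop :=
  (forall x, is_point Tf x -> Hset x.2 -> is_node_pt Tf x) /\
  (forall y, is_point Tg y -> Hset (y.2 - eps) -> is_node_pt Tg y).

Definition phi_path (a : mt_V Tf -> mt_V Tg) (u : mt_V Tf)
    (x : point Tf) (y : point Tg) : Prop :=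
  [/\ is_point Tg y, anc Tg y (node_pt Tg (a u)) & y.2 = x.2 + eps].

Definition ancestor_shift (phi : point Tf -> point Tg) : Prop :=
  forall x1 x2, is_point Tf x1 -> is_point Tf x2 -> anc Tg (phi x1) (phi x2) ->
  forall y1 y2, shift2 Tf eps x1 y1 -> shift2 Tf eps x2 y2 -> anc Tf y1 y2.

End PairDefs.

Arguments Hset {R} Tf Tg eps h.
Arguments augmented {R} Tf Tg eps.
Arguments phi_path {R} Tf Tg eps a u x y.
Arguments ancestor_shift {R} Tf Tg eps phi.

(* If phi identifies the nodes ur, us of a 2eps-pair of leaves ui, uj, the
   Ancestor-Shift property at ur and us puts i^{2eps}(ur) above both leaves,
   hence above their lca v; but f(v) > f(ur) + 2eps.
   Conversely, let phi(x1) >= phi(x2) with i^{2eps}(x1) not above x2.  Then x1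
   and x2 lie on incomparable branches, above leaves u1 and u2, and
   f(x1) + 2eps < f(w) for w the lca of u1 and u2.  As the tree is augmented,
   both branches carry nodes at the height of the higher of the two nodes just
   below x1 and x2 (node heights lie in H), so (u1, u2) has a 2eps-pair
   (ur, us).  By its maximality no value of H lies strictly between f(ur) and
   f(w) - 2eps; hence no node of the augmented Mg separates the image paths of
   u1 and u2 between the levels of phi(ur) and phi(x1).  These paths meet at
   phi(x1), so they already agree at the level of phi(ur): phi(ur) = phi(us). *)

From HB Require Import structures.
From mathcomp Require Import all_boot all_order all_algebra.
From mathcomp Require Import boolp reals lra.
Set Implicit Arguments. Unset Strict Implicit. Unset Printing Implicit Defensive.
Import Order.TTheory GRing.Theory Num.Theory.
Local Open Scope ring_scope.

Section FiniteExtrema.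
Variables (d : Order.disp_t) (O : orderType d) (T : finType) (F : T -> O).

Lemma exists_argmin (P : T -> Prop) x : P x ->
  exists2 m, P m & forall y, P y -> (F m <= F y)%O.
Proof.
move=> /asboolP Pbx.
case: (arg_minP (P := fun y => `[< P y >]) F Pbx) => m /asboolP Pm min_m.
by exists m => // y /asboolP; exact: min_m.
Qed.

Lemma exists_argmax (P : T -> Prop) x : P x ->
  exists2 m, P m & forall y, P y -> (F y <= F m)%O.
Proof.
move=> /asboolP Pbx.
case: (arg_maxP (P := fun y => `[< P y >]) F Pbx) => m /asboolP Pm max_m.
by exists m => // y /asboolP; exact: max_m.
Qed.

End FiniteExtrema.

Section MergeTree.
Variables (R : realType) (T : mtree R).
Local Notation par := (mt_par T).
Local Notation root := (mt_root T).
Local Notation ht := (mt_ht T).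
Local Notation anc_node := (anc_node T).

Lemma iter_par_root k : iter k par root = root.
Proof. by elim: k => //= k ->; exact: mt_par_root. Qed.

Lemma ht_le_par v : ht v <= ht (par v).
Proof.
case: (eqVneq v root) => [->|/eqP nvr]; first by rewrite mt_par_root.
exact/ltW/mt_mono.
Qed.

Lemma anc_node_refl c : anc_node c c. Proof. by exists 0%N. Qed.

Lemma anc_node_par c : anc_node (par c) c. Proof. by exists 1%N. Qed.

Lemma anc_node_trans a b c : anc_node a b -> anc_node b c -> anc_node a c.
Proof. by move=> [k <-] [l <-]; exists (k + l)%N; rewrite iterD. Qed.

Lemma anc_node_root c : anc_node root c. Proof. exact: mt_reach. Qed.

Lemma ht_anc_node a c : anc_node a c -> ht c <= ht a.
Proof. by move=> [k <-]; elim: k => //= k IH; exact: le_trans IH (ht_le_par _). Qed.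

Lemma ht_le_root c : ht c <= ht root. Proof. exact/ht_anc_node/anc_node_root. Qed.

Lemma anc_node_total a b c : anc_node a c -> anc_node b c -> anc_node a b \/ anc_node b a.
Proof.
move=> [k <-] [l <-]; case: (leqP k l) => hkl.
  by right; exists (l - k)%N; rewrite -iterD subnK.
by left; exists (k - l)%N; rewrite -iterD subnK // ltnW.
Qed.

Lemma anc_node_par_neq a c : anc_node a c -> a != c -> anc_node a (par c) /\ c <> root.
Proof.
move=> [[|k] <-]; first by rewrite eqxx.
move=> nac; split; first by exists k; rewrite -iterSr.
by move=> cr; move: nac; rewrite cr iter_par_root eqxx.
Qed.

Lemma ht_anc_node_lt a c : anc_node a c -> a != c -> ht c < ht a.
Proof.
move=> ac nac; have [apc ncr] := anc_node_par_neq ac nac.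
exact: lt_le_trans (mt_mono ncr) (ht_anc_node apc).
Qed.

Lemma anc_node_antisym a b : anc_node a b -> anc_node b a -> a = b.
Proof.
move=> ab ba; case: (eqVneq a b) => // nab.
by have := ht_anc_node_lt ab nab; rewrite ltNge ht_anc_node.
Qed.

Lemma leaf_below c : exists2 u, is_leaf T u & anc_node c u.
Proof.
have [u cu min_u] := exists_argmin ht (P := anc_node c) (anc_node_refl c).
exists u => //; apply/forallP => w; apply/implyP => /eqP pwu.
case: (eqVneq w u) => // /eqP wu; exfalso; have nwr : w <> root.
  by move=> wr; apply: wu; rewrite -pwu wr mt_par_root.
have cw : anc_node c w by apply: anc_node_trans cu _; rewrite -pwu; exact: anc_node_par.
by have := min_u w cw; have := mt_mono nwr; rewrite pwu; lra.
Qed.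

Lemma is_lca_exists u1 u2 : exists w, is_lca T u1 u2 w.
Proof.
have [m [m1 m2] min_m] := exists_argmin ht
  (P := fun w => anc_node w u1 /\ anc_node w u2) (conj (anc_node_root u1) (anc_node_root u2)).
exists m; split => // w w1 w2; case: (anc_node_total w1 m1) => // mw.
case: (eqVneq m w) => [->|nmw]; first exact: anc_node_refl.
by have := min_m w (conj w1 w2); have := ht_anc_node_lt mw nmw; lra.
Qed.

Lemma is_lca_sym u1 u2 w : is_lca T u1 u2 w -> is_lca T u2 u1 w.
Proof. by move=> [w1 w2 min_w]; split => // x x2 x1; exact: min_w. Qed.

Lemma is_lca_unique u1 u2 v w : is_lca T u1 u2 v -> is_lca T u1 u2 w -> v = w.
Proof. by move=> [v1 v2 min_v] [w1 w2 min_w]; apply: anc_node_antisym; auto. Qed.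

Lemma is_lca_anc_node c1 c2 u1 u2 w : anc_node c1 u1 -> anc_node c2 u2 ->
  ~ (anc_node c1 c2 \/ anc_node c2 c1) -> is_lca T u1 u2 w -> anc_node w c1.
Proof.
move=> c1u1 c2u2 incmp [w1 w2 _]; case: (anc_node_total w1 c1u1) => // c1w.
by case: incmp; exact: anc_node_total (anc_node_trans c1w w2) c2u2.
Qed.

Lemma twoeps_pair_exists eps u1 u2 w r s : is_lca T u1 u2 w ->
  anc_node r u1 -> anc_node s u2 -> ht r = ht s -> 2 * eps < ht w - ht r ->
  exists ur us, twoeps_pair T eps u1 u2 ur us.
Proof.
move=> lw ru1 su2 hrs hr.
pose P r := [/\ anc_node r u1, exists2 s, anc_node s u2 & ht r = ht s
                & 2 * eps < ht w - ht r].
have [ur [uru1 [us usu2 hurs] hur] max_ur] :=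
  exists_argmax ht (P := P) (And3 ru1 (ex_intro2 _ _ s su2 hrs) hr).
exists ur, us, w; do 5 (split => //).
by move=> r' s' r'u1 s'u2 hrs' hr'; apply: max_ur; split => //; exists s'.
Qed.

Lemma anc_refl (x : point T) : anc T x x.
Proof. by split; [exact: anc_node_refl | exact: lexx]. Qed.

Lemma node_pt_is_point v : is_point T (node_pt T v).
Proof. by split => [|/= -> //]; split => //=; exact: mt_mono. Qed.

Lemma point_le_root (x : point T) : is_point T x -> x.2 <= ht root.
Proof.
move=> [[_ x_lt] x_root]; case: (eqVneq x.1 root) => [/x_root -> //|/eqP nxr].
exact: ltW (lt_le_trans (x_lt nxr) (ht_le_root _)).
Qed.

Lemma anc_node_pt (x : point T) u :
  is_ext_point T x -> anc_node x.1 u -> anc T x (node_pt T u).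
Proof. by move=> [hx _] xu; split => //=; exact: le_trans (ht_anc_node xu) hx. Qed.

Lemma leaf_below_point (x : point T) : is_ext_point T x ->
  exists2 u, is_leaf T u & anc T x (node_pt T u).
Proof. by move=> ex; have [u lu xu] := leaf_below x.1; exists u; last exact: anc_node_pt. Qed.

(* The point of height [t] above [c] lies on the edge of the highest ancestor
   of [c] that is not above height [t]. *)
Lemma ext_point_exists_above c t : ht c <= t ->
  exists y : point T, [/\ is_ext_point T y, anc_node y.1 c & y.2 = t].
Proof.
move=> hct; have [n [nc hnt] max_n] :=
  exists_argmax ht (P := fun n => anc_node n c /\ ht n <= t) (conj (anc_node_refl c) hct).
exists (n, t); split => //; split => //= nnr; rewrite ltNge; apply/negP => hpt.
have := max_n (par n) (conj (anc_node_trans (anc_node_par n) nc) hpt).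
by have := mt_mono nnr; lra.
Qed.

Lemma point_exists_above c t : ht c <= t -> t <= ht root ->
  exists y : point T, [/\ is_point T y, anc_node y.1 c & y.2 = t].
Proof.
move=> hct htr; have [y [ey yc yt]] := ext_point_exists_above hct.
exists y; split => //; split => // yr; have := ey.1; rewrite yr yt => hrt.
by apply/eqP; rewrite eq_le hrt htr.
Qed.

Lemma anc_node_of_ext_point_le (p q : point T) c : is_ext_point T p -> is_ext_point T q ->
  anc_node p.1 c -> anc_node q.1 c -> p.2 <= q.2 -> anc_node q.1 p.1.
Proof.
move=> [hp _] [_ hq] pc qc hpq; case: (anc_node_total pc qc) => // pq.
case: (eqVneq p.1 q.1) => [->|npq]; first exact: anc_node_refl.
have [ppq nqr] := anc_node_par_neq pq npq.
by have := hq nqr; have := ht_anc_node ppq; lra.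
Qed.

Lemma ext_point_eq (p q : point T) c : is_ext_point T p -> is_ext_point T q ->
  anc_node p.1 c -> anc_node q.1 c -> p.2 = q.2 -> p = q.
Proof.
move=> ex_p ex_q pc qc hpq; apply: injective_projections => //.
by apply: anc_node_antisym; [apply: (anc_node_of_ext_point_le ex_q ex_p qc pc) |
  apply: (anc_node_of_ext_point_le ex_p ex_q pc qc)]; rewrite hpq.
Qed.

Lemma ext_point_same_edge (p q : point T) c : is_ext_point T p -> is_ext_point T q ->
  anc_node p.1 c -> anc_node q.1 c -> p.2 <= q.2 ->
  (forall v, p.2 < ht v -> ht v <= q.2 -> False) -> p.1 = q.1.
Proof.
move=> ex_p ex_q pc qc hpq no_node; have qp := anc_node_of_ext_point_le ex_p ex_q pc qc hpq.
case: (eqVneq q.1 p.1) => // nqp; have [qpp npr] := anc_node_par_neq qp nqp.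
exfalso; apply: (no_node q.1); first exact: lt_le_trans (ex_p.2 npr) (ht_anc_node qpp).
exact: ex_q.1.
Qed.

Lemma ext_point_eq_near_meet (p p' q : point T) c c' :
  is_ext_point T p -> is_ext_point T p' -> is_ext_point T q ->
  anc_node p.1 c -> anc_node p'.1 c' -> anc_node q.1 c -> anc_node q.1 c' -> p.2 = p'.2 ->
  (forall v, p.2 < ht v -> ht v <= q.2 -> False) -> p = p'.
Proof.
move=> ex_p ex_p' ex_q pc p'c' qc qc' hpp' no_node; case: (ltP q.2 p.2) => hqp.
  have pq := anc_node_of_ext_point_le ex_q ex_p qc pc (ltW hqp).
  have hqp' : q.2 <= p'.2 by rewrite -hpp' ltW.
  have p'q := anc_node_of_ext_point_le ex_q ex_p' qc' p'c' hqp'.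
  exact: ext_point_eq ex_p ex_p' pq p'q hpp'.
have pq := ext_point_same_edge ex_p ex_q pc qc hqp no_node.
have p'q : p'.1 = q.1 by apply: (ext_point_same_edge ex_p' ex_q p'c' qc'); rewrite -hpp'.
by apply: injective_projections; rewrite // pq p'q.
Qed.

Lemma shift2_exists eps (x : point T) : 0 <= eps -> is_ext_point T x ->
  exists y, shift2 T eps x y.
Proof.
move=> eps_ge0 [hx _].
have hxt : ht x.1 <= x.2 + 2 * eps by lra.
have [y [ey yx hy]] := ext_point_exists_above hxt.
by exists y; split => //; split => //; rewrite hy; lra.
Qed.

Lemma shift2_anc eps (x1 x2 y1 y2 : point T) : shift2 T eps x1 y1 -> shift2 T eps x2 y2 ->
  x2.2 <= x1.2 -> anc_node y1.1 x2.1 -> anc T y1 y2.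
Proof.
move=> [ey1 _ hy1] [ey2 [y2x2 _] hy2] hx y1x2; split; last lra.
by apply: (anc_node_of_ext_point_le ey2 ey1 y2x2 y1x2); lra.
Qed.

End MergeTree.

Section AncestorShift.
Variables (R : realType) (Tf Tg : mtree R) (eps : R).
Local Notation htf := (mt_ht Tf).

Lemma ancestor_shift_twoeps_pair_neq (phi : point Tf -> point Tg) ui uj ur us :
  0 <= eps -> ancestor_shift Tf Tg eps phi -> twoeps_pair Tf eps ui uj ur us ->
  phi (node_pt Tf ur) <> phi (node_pt Tf us).
Proof.
move=> eps_ge0 AS [v [[_ _ lca_v] [urui [usuj [_ [hv _]]]]]] phi_rs.
have [pr ps] := (node_pt_is_point ur, node_pt_is_point us).
have [y1 S1] := shift2_exists eps_ge0 pr.1.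
have [y2 S2] := shift2_exists eps_ge0 ps.1.
have phi_rs_anc : anc Tg (phi (node_pt Tf ur)) (phi (node_pt Tf us)).
  by rewrite phi_rs; exact: anc_refl.
have [y1y2 _] := AS _ _ pr ps phi_rs_anc _ _ S1 S2.
have [[y1_ge _] [y1r _] hy1] := S1; have [_ [y2s _] _] := S2.
have y1v : anc_node Tf y1.1 v.
  by apply: lca_v; [exact: anc_node_trans y1r urui |
    exact: anc_node_trans y1y2 (anc_node_trans y2s usuj)].
by have := ht_anc_node y1v; rewrite /= in hy1; lra.
Qed.

Hypothesis aug : augmented Tf Tg eps.

Lemma node_at_level c t : Hset Tf Tg eps t -> htf c <= t -> t <= htf (mt_root Tf) ->
  exists2 n, anc_node Tf n c & htf n = t.
Proof.
move=> Ht hct htr; have [y [py yc yt]] := point_exists_above hct htr.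
have ny : is_node_pt Tf y by apply: aug.1; rewrite ?yt.
by exists y.1; rewrite -?ny.
Qed.

Lemma common_level_nodes u1 u2 c1 c2 : anc_node Tf c1 u1 -> anc_node Tf c2 u2 ->
  exists r s, [/\ anc_node Tf r u1, anc_node Tf s u2, htf r = htf s
                & htf r = Num.max (htf c1) (htf c2)].
Proof.
wlog le21 : u1 u2 c1 c2 / htf c2 <= htf c1.
  move=> gen c1u1 c2u2; have [h21|h12] := orP (le_total (htf c2) (htf c1)); first exact: gen.
  have [s [r [su2 ru1 hsr hs]]] := gen u2 u1 c2 c1 h12 c2u2 c1u1.
  by exists r, s; split => //; rewrite -hsr hs maxC.
move=> c1u1 c2u2.
have [s sc2 hs] := node_at_level (or_introl (ex_intro _ c1 erefl)) le21 (ht_le_root c1).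
exists c1, s; split => //; first exact: anc_node_trans sc2 c2u2.
by rewrite max_l.
Qed.

Lemma twoeps_pair_gap u1 u2 ur us w h : 0 <= eps -> twoeps_pair Tf eps u1 u2 ur us ->
  is_lca Tf u1 u2 w -> Hset Tf Tg eps h -> htf ur < h -> h < htf w - 2 * eps -> False.
Proof.
move=> eps_ge0 [v [lca_v [uru1 [usu2 [hrs [_ max_ur]]]]]] lca_w Hh hurh hhw.
rewrite -(is_lca_unique lca_v lca_w) in hhw.
have hhr : h <= htf (mt_root Tf) by have := ht_le_root v; lra.
have [n1 n1ur hn1] := node_at_level Hh (ltW hurh) hhr.
have husv : htf us <= h by rewrite -hrs ltW.
have [n2 n2us hn2] := node_at_level Hh husv hhr.
have := max_ur n1 n2 (anc_node_trans n1ur uru1) (anc_node_trans n2us usu2).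
by rewrite hn1 hn2; lra.
Qed.

Variables (a : mt_V Tf -> mt_V Tg) (phi : point Tf -> point Tg).
Hypothesis phiP : forall u x, is_leaf Tf u -> is_point Tf x -> anc Tf x (node_pt Tf u) ->
  phi_path Tf Tg eps a u x (phi x).

Lemma phi_node_pt u c : is_leaf Tf u -> anc_node Tf c u ->
  phi_path Tf Tg eps a u (node_pt Tf c) (phi (node_pt Tf c)).
Proof.
move=> lu cu; have pc := node_pt_is_point c.
exact: phiP lu pc (anc_node_pt pc.1 cu).
Qed.

Lemma phi_ht x : is_point Tf x -> (phi x).2 = x.2 + eps.
Proof. by move=> px; have [u lu xu] := leaf_below_point px.1; case: (phiP lu px xu). Qed.

Lemma phi_anc_ht_le x1 x2 : is_point Tf x1 -> is_point Tf x2 ->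
  anc Tg (phi x1) (phi x2) -> x2.2 <= x1.2.
Proof. by move=> px1 px2 [_]; rewrite (phi_ht px1) (phi_ht px2) lerD2r. Qed.

Lemma phi_eq_at_level x1 x2 z u1 u2 : is_leaf Tf u1 -> is_leaf Tf u2 ->
  is_point Tf x1 -> anc Tf x1 (node_pt Tf u1) ->
  is_point Tf x2 -> anc Tf x2 (node_pt Tf u2) ->
  is_point Tf z -> anc Tf z (node_pt Tf u2) -> z.2 = x1.2 ->
  anc Tg (phi x1) (phi x2) -> phi x1 = phi z.
Proof.
move=> lu1 lu2 px1 x1u1 px2 x2u2 pz zu2 hz [x12 h12].
have [[ex1 _] _ h1] := phiP lu1 px1 x1u1.
have [[ex2 _] [x2a _] h2] := phiP lu2 px2 x2u2.
have [[exz _] [za _] hz'] := phiP lu2 pz zu2.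
apply: (ext_point_eq ex1 exz x12); last by rewrite h1 hz' hz.
by apply: (anc_node_of_ext_point_le ex2 exz x2a za); lra.
Qed.

Lemma collapsed_twoeps_pair x1 x2 u1 u2 w : 0 <= eps -> is_leaf Tf u1 -> is_leaf Tf u2 ->
  is_point Tf x1 -> anc Tf x1 (node_pt Tf u1) ->
  is_point Tf x2 -> anc Tf x2 (node_pt Tf u2) ->
  is_lca Tf u1 u2 w -> x1.2 + 2 * eps < htf w -> anc Tg (phi x1) (phi x2) ->
  exists ur us, twoeps_pair Tf eps u1 u2 ur us /\ phi (node_pt Tf ur) = phi (node_pt Tf us).
Proof.
move=> eps_ge0 lu1 lu2 px1 x1u1 px2 x2u2 lca_w hw x12.
have hx := phi_anc_ht_le px1 px2 x12.
have [r [s [ru1 su2 hrs hr]]] := common_level_nodes x1u1.1 x2u2.1.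
have hrx : htf r <= x1.2.
  by rewrite hr ge_max px1.1.1 (le_trans px2.1.1 hx).
have hrw : 2 * eps < htf w - htf r by lra.
have [ur [us TP]] := twoeps_pair_exists lca_w ru1 su2 hrs hrw.
exists ur, us; split => //.
have [_ [_ [uru1 [usu2 [hurs _]]]]] := TP.
have hu2x : htf u2 <= x1.2 := le_trans x2u2.2 hx.
have [z [pz zu2 hz]] := point_exists_above hu2x (point_le_root px1).
have zu2' := anc_node_pt pz.1 zu2.
have phi_xz := phi_eq_at_level lu1 lu2 px1 x1u1 px2 x2u2 pz zu2' hz x12.
have [[ex1 _] [x1a _] h1] := phiP lu1 px1 x1u1.
have [[exz _] [za _] _] := phiP lu2 pz zu2'.
have [[er _] [ra _] hr'] := phi_node_pt lu1 uru1.
have [[es _] [sa _] hs'] := phi_node_pt lu2 usu2.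
rewrite -phi_xz in za.
apply: (ext_point_eq_near_meet er es ex1 ra sa x1a za); first by rewrite hr' hs' /= hurs.
move=> v hv1 hv2; apply: (twoeps_pair_gap (h := mt_ht Tg v - eps) eps_ge0 TP lca_w).
- by right; exists v.
- by rewrite hr' /= in hv1; lra.
- by rewrite h1 in hv2; lra.
Qed.

Lemma ancestor_shift_of_twoeps_pairs_neq : 0 <= eps ->
  (forall ui uj, is_leaf Tf ui -> is_leaf Tf uj -> ui <> uj ->
     forall ur us, twoeps_pair Tf eps ui uj ur us ->
       phi (node_pt Tf ur) <> phi (node_pt Tf us)) ->
  ancestor_shift Tf Tg eps phi.
Proof.
move=> eps_ge0 sep x1 x2 px1 px2 x12 y1 y2 S1 S2.
have [u1 lu1 x1u1] := leaf_below_point px1.1.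
have [u2 lu2 x2u2] := leaf_below_point px2.1.
have hx := phi_anc_ht_le px1 px2 x12.
have [ey1 [y1x1 _] hy1] := S1; apply: (shift2_anc S1 S2 hx).
case: (EM (anc_node Tf x1.1 x2.1 \/ anc_node Tf x2.1 x1.1)) => [cmp|incmp].
  apply: anc_node_trans y1x1 _; case: cmp => // x21.
  exact: anc_node_of_ext_point_le px2.1 px1.1 x21 (anc_node_refl _) hx.
have [w lca_w] := is_lca_exists u1 u2.
have wx1 := is_lca_anc_node x1u1.1 x2u2.1 incmp lca_w.
have incmp' : ~ (anc_node Tf x2.1 x1.1 \/ anc_node Tf x1.1 x2.1) by rewrite or_comm.
have wx2 := is_lca_anc_node x2u2.1 x1u1.1 incmp' (is_lca_sym lca_w).
case: (leP (htf w) y1.2) => hw.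
  have y1w := anc_node_of_ext_point_le (node_pt_is_point w).1 ey1 wx1 y1x1 hw.
  exact: anc_node_trans y1w wx2.
have u12 : u1 <> u2.
  by move=> e; apply: incmp; rewrite e in x1u1; exact: anc_node_total x1u1.1 x2u2.1.
have hw' : x1.2 + 2 * eps < htf w by rewrite -hy1.
have [ur [us [TP phi_rs]]] :=
  collapsed_twoeps_pair eps_ge0 lu1 lu2 px1 x1u1 px2 x2u2 lca_w hw' x12.
by case: (sep u1 u2 lu1 lu2 u12 ur us TP phi_rs).
Qed.

End AncestorShift.

Theorem theorem4p8 (R : realType) (Tf Tg : mtree R) (eps : R) :
  0 < eps ->
  mt_ht Tg (mt_root Tg) = mt_ht Tf (mt_root Tf) + eps ->
  augmented Tf Tg eps ->
  forall a : mt_V Tf -> mt_V Tg,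
  (forall u, is_leaf Tf u -> mt_ht Tg (a u) = mt_ht Tf u + eps) ->
  (forall ui uj v, is_leaf Tf ui -> is_leaf Tf uj -> ui <> uj -> is_lca Tf ui uj v ->
     forall y1 y2, phi_path Tf Tg eps a ui (node_pt Tf v) y1 ->
       phi_path Tf Tg eps a uj (node_pt Tf v) y2 -> y1 = y2) ->
  forall phi : point Tf -> point Tg,
  (forall u x, is_leaf Tf u -> is_point Tf x -> anc Tf x (node_pt Tf u) ->
     phi_path Tf Tg eps a u x (phi x)) ->
  (ancestor_shift Tf Tg eps phi <->
   forall ui uj, is_leaf Tf ui -> is_leaf Tf uj -> ui <> uj ->
     forall ur us, twoeps_pair Tf eps ui uj ur us ->
       phi (node_pt Tf ur) <> phi (node_pt Tf us)).
Proof.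
(* The root and leaf conditions and the agreement at lcas only ensure that
   such a [phi] exists; the equivalence holds for any [phi] built from paths. *)
move=> /ltW eps_ge0 _ aug a _ _ phi phiP; split.
- by move=> AS ui uj _ _ _ ur us; exact: ancestor_shift_twoeps_pair_neq eps_ge0 AS.
- exact: (ancestor_shift_of_twoeps_pairs_neq aug phiP eps_ge0).
Qed.
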